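(* Define subgroups $W_1 \subseteq \dots \subseteq W_p \subseteq W_{p+1} := W_{\mathfrak g}$ by $W_p = \operatorname{Stab}_{W_{\mathfrak g}}(U_p)$ and $W_{i-1} = \operatorname{Stab}_{W_i}(U_{i-1})$ for $i \in \{2,\dots,p\}$. Then $W_i = \operatorname{Stab}_{W_{i+1}}(\mathbf B_i)$ for all $i \in \{1,\dots,p\}$, and $(W_{\mathfrak g}Q) \cap \mathbf B = \mathcal O_Q$, where $\mathcal O_Q$ is the orbit of $Q$ under $W_1$.
   Context: $G$ is a connected complex reductive Lie group, $\mathfrak g = \mathrm{Lie}(G)$, $T\subseteq G$ a maximal torus, $\mathfrak t = \mathrm{Lie}(T)$, $\Phi_{\mathfrak g}$ the root system of $(\mathfrak g,\mathfrak t)$, $W_{\mathfrak g}$ the Weyl group acting on $\mathfrak t$. For $S \subseteq \mathfrak t$ and a subgroup $H \subseteq W_{\mathfrak g}$, $\operatorname{Stab}_H(S) = \{w \in H : w(S)\subseteq S\}$. Fix an integer $p \geq 1$ and $A_1,\dots,A_p \in \mathfrak t$, and let $Q = \sum_{i=1}^p A_i z^{-i}$, identified with $(A_1,\dots,A_p) \in \mathfrak t^p$, on which $W_{\mathfrak g}$ acts diagonally. For $\alpha \in \Phi_{\mathfrak g}$ let $d_\alpha = \max\{i : \alpha(A_i)\neq 0\}$ ($d_\alpha = 0$ if $\alpha(A_i)=0$ for all $i$). For $i \in \{1,\dots,p\}$ let $\Phi_{\mathfrak h_i} = \{\alpha : d_\alpha < i\}$ (the roots of the centraliser of $\{A_i,\dots,A_p\}$),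 $U_i = \bigcap_{\alpha \in \Phi_{\mathfrak h_i}}\ker(\alpha)$ (equal to $\mathfrak t$ if $\Phi_{\mathfrak h_i}$ is empty), and $$\mathbf B_i = \{X \in \mathfrak t : \alpha(X) = 0 \text{ whenever } d_\alpha < i, \ \alpha(X) \neq 0 \text{ whenever } d_\alpha = i\},$$ and $\mathbf B = \mathbf B_1 \times \dots \times \mathbf B_p \subseteq \mathfrak t^p$. *)

(* Abstract (reduced, crystallographic) root datum over C = R[i],
   R : realType (so C is (isomorphic to) the complex numbers).
   t = 'rV[C]_n (row vectors); a root / linear form alpha on t is a column vector
   'cV[C]_n with alpha(X) = (X *m alpha) 0 0; Weyl group elements are matrices
   w : 'M[C]_n acting on t by X |-> X *m w. *)
From HB Require Import structures.
From mathcomp Require Import all_boot all_order all_algebra.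
From mathcomp Require Import reals.
From mathcomp Require Import complex.
Set Implicit Arguments. Unset Strict Implicit. Unset Printing Implicit Defensive.
Import Order.TTheory GRing.Theory Num.Theory.
Local Open Scope ring_scope.

Section RootData.
Variables (R : realType) (n : nat).
Notation C := (R[i])%C.

Definition reval (X : 'rV[C]_n) (a : 'cV[C]_n) : C := (X *m a) 0 0.

Definition refl (a : 'cV[C]_n) (av : 'rV[C]_n) : 'M[C]_n := 1%:M - a *m av.

Definition is_root_datum (Phi : seq 'cV[C]_n) (cor : 'cV[C]_n -> 'rV[C]_n) : Prop :=
  (forall a, a \in Phi -> a != 0) /\
  (forall a, a \in Phi -> reval (cor a) a = 2) /\
  (forall a b, a \in Phi -> b \in Phi -> refl a (cor a) *m b \in Phi) /\
  (forall a b, a \in Phi -> b \in Phi ->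
     cor (refl a (cor a) *m b) = cor b *m refl a (cor a)) /\
  (forall a b, a \in Phi -> b \in Phi -> exists z : int, reval (cor a) b = z%:~R) /\
  (forall a (c : C), a \in Phi -> c *: a \in Phi -> c = 1 \/ c = -1).

Inductive weyl (Phi : seq 'cV[C]_n) (cor : 'cV[C]_n -> 'rV[C]_n) : 'M[C]_n -> Prop :=
| weyl1 : weyl Phi cor 1%:M
| weylS w a : weyl Phi cor w -> a \in Phi -> weyl Phi cor (w *m refl a (cor a)).

Definition Stab (H : 'M[C]_n -> Prop) (S : 'rV[C]_n -> Prop) : 'M[C]_n -> Prop :=
  fun w => H w /\ forall X, S X -> S (X *m w).

(* Q = sum_{i=1}^p A_i z^-i encoded by A : nat -> 'rV_n, only indices 1..p matter *)
(* d_alpha = max { i in 1..p : alpha(A_i) <> 0 }, 0 if none *)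
Definition dalpha (p : nat) (A : nat -> 'rV[C]_n) (a : 'cV[C]_n) : nat :=
  \max_(1 <= i < p.+1 | reval (A i) a != 0) i.

Definition Uset (Phi : seq 'cV[C]_n) p A (i : nat) : 'rV[C]_n -> Prop :=
  fun X => forall a, a \in Phi -> (dalpha p A a < i)%N -> reval X a = 0.

Definition Bset (Phi : seq 'cV[C]_n) p A (i : nat) : 'rV[C]_n -> Prop :=
  fun X => (forall a, a \in Phi -> (dalpha p A a < i)%N -> reval X a = 0) /\
           (forall a, a \in Phi -> dalpha p A a = i -> reval X a != 0).

(* Wrec k = W_{p+1-k}: Wrec 0 = W_g, Wrec k.+1 = Stab_{Wrec k}(U_{p-k}) *)
Fixpoint Wrec Phi cor p A (k : nat) : 'M[C]_n -> Prop :=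
  match k with
  | 0 => weyl Phi cor
  | k'.+1 => Stab (Wrec Phi cor p A k') (Uset Phi p A (p - k'))
  end.

Definition Wsub Phi cor p A (i : nat) : 'M[C]_n -> Prop := Wrec Phi cor p A (p.+1 - i).

End RootData.

(* A Weyl group element w stabilising U_j permutes the roots with d_alpha < j:
   it maps this finite set injectively into itself.  Hence if w stabilises
   U_i, ..., U_p it preserves every d_alpha >= i, and so maps B_i into B_i.
   Conversely, for X in U_i a suitable multiple t A_i moves X off the finitely
   many hyperplanes alpha = 0 with d_alpha = i, so X = (X + t A_i) - t A_i is a
   difference of two points of B_i; a w stabilising B_i thus stabilises U_i.
   For the orbit: if A_k w lies in B_k for every k, then w sends roots with
   d_alpha < j to such roots, i.e. w stabilises every U_j and lies in W_1. *)
From HB Require Import structures.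
From mathcomp Require Import all_boot all_order all_algebra.
From mathcomp Require Import reals complex.
From mathcomp Require Import zify.
Import Order.TTheory GRing.Theory Num.Theory.
Local Open Scope ring_scope.
Set Implicit Arguments. Unset Strict Implicit. Unset Printing Implicit Defensive.

Lemma mem_inj_selfmap (T : eqType) (f : T -> T) (s : seq T) x :
  injective f -> {subset map f s <= s} -> (f x \in s) = (x \in s).
Proof.
move=> injf fs; apply/idP/idP => [fxs|xs]; last exact/fs/map_f.
have fs' : {subset map f (undup s) <= undup s}.
  by move=> y /mapP[z]; rewrite !mem_undup => zs ->; apply/fs/map_f.
have fs_uniq : uniq (map f (undup s)) by rewrite (map_inj_uniq injf) undup_uniq.
have [_ eq_s] := uniq_min_size fs_uniq fs' (eq_leq (esym (size_map f (undup s)))).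
by rewrite -mem_undup -(mem_map injf) eq_s mem_undup.
Qed.

Lemma exists_shift_nonzero (F : numFieldType) (I : eqType) (s : seq I)
    (x y : I -> F) :
  exists t, forall a, a \in s -> y a != 0 -> x a + t * y a != 0.
Proof.
pose bad := map (fun a => - x a / y a) s.
pose cands := map (fun k : nat => k%:R : F) (iota 0 (size s).+1).
have [/allP cands_bad | /allPn [t _ t_good]] := boolP (all (mem bad) cands).
  have cands_uniq : uniq cands.
    by rewrite map_inj_uniq ?iota_uniq // => k1 k2 /eqP; rewrite eqr_nat => /eqP.
  by have := uniq_leq_size cands_uniq cands_bad; rewrite !size_map size_iota ltnn.
exists t => a aP ya; apply: contra t_good => /eqP xty0; apply/mapP; exists a => //.
by rewrite -(mulfK ya t); congr (_ / _); apply/eqP; rewrite -addr_eq0 addrC xty0.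
Qed.

Section WeylGroup.
Variables (R : realType) (n : nat).
Notation C := (R[i])%C.
Implicit Types (X Y : 'rV[C]_n) (a b : 'cV[C]_n) (w : 'M[C]_n).

Definition stabilizes w (S : 'rV[C]_n -> Prop) := forall X, S X -> S (X *m w).

Lemma revalM X w a : reval (X *m w) a = reval X (w *m a).
Proof. by rewrite /reval mulmxA. Qed.

Lemma revalD X Y a : reval (X + Y) a = reval X a + reval Y a.
Proof. by rewrite /reval mulmxDl mxE. Qed.

Lemma revalB X Y a : reval (X - Y) a = reval X a - reval Y a.
Proof. by rewrite /reval mulmxBl !mxE. Qed.

Lemma revalZ (c : C) X a : reval (c *: X) a = c * reval X a.
Proof. by rewrite /reval -scalemxAl mxE. Qed.

Lemma refl_invol a (av : 'rV[C]_n) :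
  reval av a = 2 -> refl a av *m refl a av = 1%:M.
Proof.
move=> av_a; rewrite /refl mulmxBl mul1mx mulmxBr mulmx1.
have -> : a *m av *m (a *m av) = (reval av a) *: (a *m av).
  by rewrite mulmxA -(mulmxA a) [av *m a]mx11_scalar mul_mx_scalar -scalemxAl.
by rewrite av_a scaler_nat mulr2n opprB addrK subrK.
Qed.

Variables (Phi : seq 'cV[C]_n) (cor : 'cV[C]_n -> 'rV[C]_n).
Notation weyl := (weyl Phi cor).

Variables (p : nat) (A : nat -> 'rV[C]_n).
Notation d := (dalpha p A).
Notation U := (Uset Phi p A).
Notation B := (Bset Phi p A).

Lemma dalpha_le a : (d a <= p)%N.
Proof. by apply/bigmax_leqP_seq => k; rewrite mem_index_iota ltnS => /andP[]. Qed.

Lemma dalpha_ltP j a : (0 < j)%N ->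
  (d a < j)%N <-> forall k, (j <= k <= p)%N -> reval (A k) a = 0.
Proof.
move=> j_gt0; split=> [da k /andP[jk kp] | Ak0].
  apply/eqP; apply: contraLR da => Aka; rewrite -leqNgt (leq_trans jk) //.
  by apply: (@leq_bigmax_seq _ _ _ id k) => //; rewrite mem_index_iota ltnS kp; lia.
rewrite /dalpha -(prednK j_gt0) ltnS; apply/bigmax_leqP_seq => k.
rewrite mem_index_iota ltnS => /andP[_ kp] Aka; rewrite -ltnS prednK // ltnNge.
by apply: contra Aka => jk; rewrite Ak0 ?jk.
Qed.

Lemma A_in_U j k : (j <= k <= p)%N -> U j (A k).
Proof.
move=> /andP[jk kp] a _ da.
have j_gt0 : (0 < j)%N by case: j da jk.
by apply: (dalpha_ltP a j_gt0).1 => //; rewrite jk.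
Qed.

Lemma A_in_B i : (1 <= i <= p)%N -> B i (A i).
Proof.
move=> /andP[i_gt0 ip]; split; first by apply: A_in_U; rewrite leqnn.
move=> a _ da; apply/eqP => Aia0.
suff : (d a < i)%N by rewrite da ltnn.
apply/dalpha_ltP => // k; rewrite leq_eqVlt => /andP[/orP[/eqP <- // | ik] kp].
by apply: (dalpha_ltP a (ltn0Sn i)).1; rewrite ?da ?ik.
Qed.

Lemma WrecP k w : Wrec Phi cor p A k w <->
  weyl w /\ forall m, (m < k)%N -> stabilizes w (U (p - m)).
Proof.
elim: k w => [|k IH] w /=; first by split=> [|[]].
split=> [[/IH [W sU] sUk] | [W sU]].
  by split=> // m; rewrite ltnS leq_eqVlt => /orP[/eqP -> | /sU].
by split; [apply/IH; split=> // m /ltnW /sU | apply: sU].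
Qed.

Lemma WsubP i w : Wsub Phi cor p A i w <->
  weyl w /\ forall j, (i <= j <= p)%N -> stabilizes w (U j).
Proof.
rewrite /Wsub WrecP; split=> -[W sU]; split=> //.
  by move=> j jP; rewrite -(subKn (proj2 (andP jP))); apply: sU; lia.
by move=> m mP; apply: sU; lia.
Qed.

Section RootDatum.
Hypothesis cor2 : forall a, a \in Phi -> reval (cor a) a = 2.
Hypothesis reflPhi :
  forall a b, a \in Phi -> b \in Phi -> refl a (cor a) *m b \in Phi.

Lemma weyl_unit w : weyl w -> w \in unitmx.
Proof.
elim=> [|w' a _ w'U aP]; first exact: unitmx1.
by rewrite unitmx_mul w'U; have [] := mulmx1_unit (refl_invol (cor2 aP)).
Qed.

Lemma weyl_root w a : weyl w -> a \in Phi -> w *m a \in Phi.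
Proof.
move=> W; elim: W a => [|w' b _ IH bP] a aP; first by rewrite mul1mx.
by rewrite -mulmxA; apply/IH/reflPhi.
Qed.

Lemma weyl_dalpha_lt j w a : weyl w -> stabilizes w (U j) -> (0 < j)%N ->
  a \in Phi -> (d (w *m a) < j)%N = (d a < j)%N.
Proof.
move=> W sU j_gt0 aP.
have w_inj : injective (mulmx w : 'cV[C]_n -> 'cV[C]_n).
  exact/can_inj/mulKmx/weyl_unit.
have w_lt : {subset map (mulmx w) [seq b <- Phi | d b < j]%N
             <= [seq b <- Phi | d b < j]%N}.
  move=> c /mapP[b]; rewrite mem_filter => /andP[db bP] ->.
  rewrite mem_filter weyl_root // andbT; apply/dalpha_ltP => // k kP.
  by rewrite -revalM; apply: sU db => //; apply: A_in_U.
by have := mem_inj_selfmap a w_inj w_lt; rewrite !mem_filter weyl_root ?aP ?andbT.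
Qed.

Lemma weyl_dalpha i w a : weyl w -> (0 < i)%N ->
  (forall j, (i <= j <= p)%N -> stabilizes w (U j)) ->
  a \in Phi -> (i <= d a)%N -> d (w *m a) = d a.
Proof.
move=> W i_gt0 sU aP ida; have da_gt0 := leq_trans i_gt0 ida.
apply/eqP; rewrite eqn_leq; apply/andP; split.
  have [dap | pda] := ltnP (d a) p; last first.
    have -> : d a = p by apply/anti_leq; rewrite dalpha_le pda.
    exact: dalpha_le.
  by rewrite -ltnS weyl_dalpha_lt ?ltnSn //; apply: sU; lia.
by rewrite leqNgt weyl_dalpha_lt ?ltnn //; apply: sU; rewrite ida dalpha_le.
Qed.

Lemma stabilizes_B_of_U i w : weyl w -> (1 <= i <= p)%N ->
  (forall j, (i <= j <= p)%N -> stabilizes w (U j)) -> stabilizes w (B i).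
Proof.
move=> W /andP[i_gt0 ip] sU X [XU XB]; split; first by apply: sU => //; rewrite leqnn.
move=> a aP da; rewrite revalM; apply: XB; first exact: weyl_root.
by rewrite (weyl_dalpha W i_gt0 sU aP) ?da.
Qed.

Lemma stabilizes_U_of_A_B w : weyl w ->
  (forall k, (1 <= k <= p)%N -> B k (A k *m w)) ->
  forall j, (0 < j)%N -> stabilizes w (U j).
Proof.
move=> W AwB j j_gt0 X XU a aP da; rewrite revalM; apply: XU; first exact: weyl_root.
apply/dalpha_ltP => // k /andP[jk kp]; rewrite -revalM.
by apply: (AwB k _).1 => //; [rewrite kp (leq_trans j_gt0) | exact: leq_trans jk].
Qed.

End RootDatum.

Lemma B_shift i X : (1 <= i <= p)%N -> U i X -> exists t : C, B i (X + t *: A i).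
Proof.
move=> iP XU; have [AiU AiB] := A_in_B iP.
have [t Xt0] := exists_shift_nonzero Phi (reval X) (reval (A i)).
by exists t; split=> a aP da; rewrite revalD revalZ;
  [rewrite XU // AiU // mulr0 addr0 | apply: Xt0 => //; apply: AiB].
Qed.

Lemma stabilizes_U_of_B i w : (1 <= i <= p)%N ->
  stabilizes w (B i) -> stabilizes w (U i).
Proof.
move=> iP sB X XU; have [t /sB [XtwU _]] := B_shift iP XU.
have [AiwU _] := sB _ (A_in_B iP).
have -> : X *m w = (X + t *: A i) *m w - t *: (A i *m w).
  by rewrite mulmxDl -scalemxAl addrK.
by move=> a aP da; rewrite revalB revalZ XtwU // AiwU // mulr0 subr0.
Qed.

End WeylGroup.

Theorem lemma2p7 (R : realType) (n : nat) (Phi : seq 'cV[R[i]]_n)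
  (cor : 'cV[R[i]]_n -> 'rV[R[i]]_n) (p : nat) (A : nat -> 'rV[R[i]]_n) :
  is_root_datum Phi cor -> (1 <= p)%N ->
  (forall i, (1 <= i <= p)%N -> forall w,
     Wsub Phi cor p A i w <-> Stab (Wsub Phi cor p A i.+1) (Bset Phi p A i) w) /\
  (forall Y : nat -> 'rV[R[i]]_n,
     ((exists w, weyl Phi cor w /\ forall i, (1 <= i <= p)%N -> Y i = A i *m w) /\
      (forall i, (1 <= i <= p)%N -> Bset Phi p A i (Y i)))
     <-> (exists w, Wsub Phi cor p A 1 w /\ forall i, (1 <= i <= p)%N -> Y i = A i *m w)).
Proof.
move=> [_ [cor2 [reflPhi _]]] _; split=> [i iP w | Y].
  rewrite /Stab !WsubP; split=> [[W sU] | [[W sU] sB]].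
    split; first by split=> // j /andP[ij jp]; apply: sU; rewrite jp ltnW.
    exact: (stabilizes_B_of_U cor2 reflPhi).
  split=> // j; rewrite leq_eqVlt => /andP[/orP[/eqP <- | ij] jp].
    exact: stabilizes_U_of_B.
  by apply: sU; rewrite ij.
split=> [[[w [W Yw]] YB] | [w [/WsubP [W sU] Yw]]].
  exists w; split=> //; apply/WsubP; split=> // j /andP[j_gt0 _].
  by apply: (stabilizes_U_of_A_B reflPhi) => // k kP; rewrite -Yw //; apply: YB.
split=> [|i iP]; first by exists w.
rewrite Yw //; apply: (stabilizes_B_of_U cor2 reflPhi W iP _ (A_in_B Phi A iP)).
by move=> j jP; apply: sU; lia.
Qed.
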